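(* Let $n,r\ge 1$ be integers with $n\ge 8r$, and let $k$ be an integer with $\frac n2+3r\le k\le\frac{3n}{4}$. Let $S\subset\binom{[n]}{k}$, and let $A\subset\binom{[n]}{k-r}\setminus\partial^{r}S$ be a distance-$(2r+1)$ code. Then \[\big|\partial^{3r}S\cup\partial^{2r}A\big|\ \ge\ |S|+\frac{n^r|A|}{4(2r)^{3r}}.\]
   Context: $[n]=\{1,\dots,n\}$ and $\binom{[n]}{m}$ denotes the family of $m$-element subsets of $[n]$. For a family $F\subset 2^{[n]}$ and an integer $t\ge1$, the $t$-fold shadow $\partial^{t}F$ is the family of all sets obtainable by deleting $t$ elements from some set in $F$ (i.e. $\{y: y\subset x \text{ for some } x\in F,\ |x\setminus y|=t\}$). A family $A\subset 2^{[n]}$ is a distance-$d$ code if $|x\,\triangle\, y|\ge d$ for all distinct $x,y\in A$, where $\triangle$ denotes symmetric difference. *)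

From mathcomp Require Import all_boot all_order all_algebra.
Set Implicit Arguments. Unset Strict Implicit. Unset Printing Implicit Defensive.

(* The ground set [n] is modelled by 'I_n; subsets of [n] are {set 'I_n}. *)

Definition binom (n m : nat) : {set {set 'I_n}} := [set x : {set 'I_n} | #|x| == m].

Definition shadow (n t : nat) (F : {set {set 'I_n}}) : {set {set 'I_n}} :=
  [set y : {set 'I_n} | [exists x in F, (y \subset x) && (#|x :\: y| == t)]].

Definition symdiff (n : nat) (x y : {set 'I_n}) : {set 'I_n} := (x :\: y) :|: (y :\: x).

Definition dist_code (n d : nat) (A : {set {set 'I_n}}) : Prop :=
  forall x y, x \in A -> y \in A -> x != y -> d <= #|symdiff x y|.

From mathcomp Require Import all_boot all_order all_algebra zify lra.
Set Implicit Arguments. Unset Strict Implicit. Unset Printing Implicit Defensive.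

(* Everything is counted at level l = k - 3r, where the union U lives.  Counting
   pairs y \subset x with y \in U and #|x| = k gives |U| C(n-l,3r) = |S| C(k,l) + e,
   where e counts the pairs with x \notin S.  The C(k-r,l) C(n-l,3r) pairs (y, x)
   with y \subset a, for a codeword a, are charged to e in two ways.  Those with
   x \notin S are already counted by e, and an l-set lies in few codewords since A
   is a (2r+1)-code.  Those with x \in S are transported to k-supersets of a, which
   avoid S because a \notin \partial^r S and contain no other codeword.  Each
   charge costs a factor (2r)^(3r) / n^r, so n^r |A| C(n-l,3r) <= 2 (2r)^(3r) e,
   a factor 2 better than needed. *)

Lemma ffact_leq_expn N j : N ^_ j <= N ^ j.
Proof.
elim: j => [|j IH]; first by rewrite ffactn0 expn0.
by rewrite ffactnSr expnS mulnC leq_mul // leq_subr.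
Qed.

Lemma bin_leq_expn N j : 'C(N, j) <= N ^ j.
Proof.
apply: leq_trans (ffact_leq_expn N j).
by rewrite -bin_ffact leq_pmulr // fact_gt0.
Qed.

Lemma expn_ffact_leq N r j : j <= r -> r <= N -> N ^ j * r ^_ j <= r ^ j * N ^_ j.
Proof.
move=> + rN; elim: j => [|j IH] jr; first by rewrite !ffactn0 !expn0.
rewrite !ffactnSr !expnS [N * _]mulnC [r * _]mulnC mulnACA (mulnACA (r ^ j)).
apply: leq_mul; first exact: IH (ltnW jr).
by rewrite !mulnBr [N * r]mulnC leq_sub2l // leq_mul2r rN orbT.
Qed.

Lemma expn_leq_bin N r : r <= N -> N ^ r <= r ^ r * 'C(N, r).
Proof.
move=> rN; have := expn_ffact_leq (leqnn r) rN.
by rewrite ffactnn -bin_ffact mulnA leq_pmul2r // fact_gt0.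
Qed.

Lemma expn_bin_sub_leq n l r : 0 < r -> n <= 2 * l ->
  n ^ r * 'C(n - l, r) <= (2 * r) ^ (3 * r) * 'C(l + 2 * r, 2 * r).
Proof.
move=> r_gt0 nl; set m := l + 2 * r.
have n_le : n ^ r <= (2 * r) ^ r * m ^ r by rewrite -expnMn leq_exp2r //; nia.
have bin_le : 'C(n - l, r) <= m ^ r.
  by apply: leq_trans (bin_leq_expn _ _) _; rewrite leq_exp2r //; lia.
apply: leq_trans (leq_mul n_le bin_le) _.
rewrite -mulnA -expnD addnn -mul2n.
have -> : 3 * r = r + 2 * r by lia.
rewrite expnD -mulnA leq_mul2l; apply/orP; right.
by apply: expn_leq_bin; lia.
Qed.

Lemma expn_bin_3r_leq n l r : 0 < r -> n <= 2 * l ->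
  n ^ r * 'C(3 * r, r) <= (2 * r) ^ (3 * r) * 'C(l + r, r).
Proof.
move=> r_gt0 nl.
apply: leq_trans (leq_mul (leqnn _) (bin_leq_expn _ _)) _.
rewrite -expnMn.
apply: (@leq_trans ((8 * r ^ 2) ^ r * (l + r) ^ r)).
  by rewrite -expnMn leq_exp2r //; nia.
have -> : (2 * r) ^ (3 * r) = (8 * r ^ 2) ^ r * r ^ r.
  by rewrite -expnMn mulnC expnM; congr (_ ^ _); rewrite !expnMn; lia.
rewrite -mulnA leq_mul2l; apply/orP; right.
by apply: expn_leq_bin; lia.
Qed.

Lemma sum_nat_mem_card (X : finType) (F : {set X}) (P : pred X) :
  \sum_(x in F) P x = #|[set x in F | P x]|.
Proof.
rewrite -sum1_card [RHS]big_mkcond [LHS]big_mkcond /=.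
by apply: eq_bigr => x _; rewrite inE; case: (x \in F); case: (P x).
Qed.

Lemma sum_mem_mul (X : finType) (F : {set X}) (g : X -> nat) :
  \sum_(x in F) g x = \sum_x (x \in F) * g x.
Proof. by rewrite big_mkcond; apply: eq_bigr => x _; case: (x \in F); rewrite ?mul1n. Qed.

Lemma exchange_sum_dep (I J : finType) (P : pred I) (Q : I -> pred J) (f : J -> nat) :
  \sum_(i | P i) \sum_(j | Q i j) f j = \sum_j #|[set i | P i && Q i j]| * f j.
Proof.
rewrite (exchange_big_dep predT) //=.
by apply: eq_bigr => j _; rewrite sum_nat_cond_const.
Qed.

Lemma card_le_bool (X : finType) (B : {set X}) (b : bool) :
  (forall x, x \in B -> b) -> {in B &, forall x y, x = y} -> #|B| <= b.
Proof.
case: b => [_ | B0] B_uniq /=.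
  by apply/card_le1_eqP => x y xB yB; apply/esym/B_uniq.
by rewrite leqn0 cards_eq0 -subset0; apply/subsetP => x /B0.
Qed.

Section SupersetCounting.
Variable T : finType.
Implicit Types (x y w : {set T}) (F G : {set {set T}}).

Lemma cardsU_disjoint x w : [disjoint x & w] -> #|x :|: w| = #|x| + #|w|.
Proof. by move=> xw; apply/eqP; rewrite (leq_card_setU x w).2. Qed.

Lemma disjoint_setD x w : [disjoint x & w :\: x].
Proof. by rewrite disjoints_subset setCD subsetUr. Qed.

Lemma card_supersets y j : #|y| <= j ->
  #|[set x : {set T} | (#|x| == j) && (y \subset x)]| = 'C(#|T| - #|y|, j - #|y|).
Proof.
move=> yj.
have -> : [set x : {set T} | (#|x| == j) && (y \subset x)] =
    [set y :|: w | w in [set w : {set T} | w \subset ~: y & #|w| == j - #|y|]].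
  apply/setP => x; rewrite inE; apply/andP/imsetP.
  - case=> /eqP xj yx; exists (x :\: y).
      by rewrite inE cardsDS // xj eqxx andbT setDE subsetIr.
    by rewrite setDE setUIr setUCr setIT; apply/esym/setUidPr.
  - case=> w; rewrite inE -disjoints_subset disjoint_sym => /andP [yw /eqP wj] ->.
    by rewrite cardsU_disjoint // wj subnKC // eqxx subsetUl.
rewrite card_in_imset; first by rewrite cards_draws cardsCs setCK.
move=> w1 w2; rewrite !inE -!disjoints_subset => /andP [w1y _] /andP [w2y _] e.
have := congr1 (fun s => s :\: y) e.
by rewrite !setDUl setDv !set0U (setDidPl w1y) (setDidPl w2y).
Qed.

Definition deg F y := \sum_(x in F) (y \subset x : nat).

Lemma deg_setID F G y : G \subset F -> deg F y = deg G y + deg (F :\: G) y.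
Proof. by move=> GF; rewrite /deg (big_setID G) /= (setIidPr GF). Qed.

Lemma deg_subset F G y : G \subset F -> deg G y <= deg F y.
Proof. by move=> GF; rewrite (deg_setID y GF) leq_addr. Qed.

Lemma deg_layer j y : #|y| <= j ->
  deg [set x : {set T} | #|x| == j] y = 'C(#|T| - #|y|, j - #|y|).
Proof.
move=> yj; rewrite /deg sum_nat_mem_card -card_supersets //.
by apply: eq_card => x; rewrite !inE.
Qed.

End SupersetCounting.


Section ShadowsAndCodes.
Variable n : nat.
Implicit Types (F A : {set {set 'I_n}}) (a b x y : {set 'I_n}).

Lemma card_shadow t j F y : F \subset binom n j -> y \in shadow t F -> #|y| = j - t.
Proof.
move=> Fj; rewrite inE => /existsP [x /and3P [xF yx /eqP xy_t]].
have := subsetP Fj x xF; rewrite inE => /eqP <-.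
by rewrite -xy_t cardsDS // subKn ?subset_leq_card.
Qed.

Lemma mem_shadow t F x y : x \in F -> y \subset x -> #|y| + t = #|x| -> y \in shadow t F.
Proof.
move=> xF yx xy; rewrite inE; apply/existsP; exists x.
by rewrite xF yx cardsDS // -xy addKn eqxx.
Qed.

Lemma deg_binom j y : #|y| <= j -> deg (binom n j) y = 'C(n - #|y|, j - #|y|).
Proof. by move=> yj; rewrite deg_layer // card_ord. Qed.

Lemma dist_code_eq r m A a b : dist_code (2 * r + 1) A -> a \in A -> b \in A ->
  #|a| = m -> #|b| = m -> m <= #|a :&: b| + r -> a = b.
Proof.
move=> codeA aA bA am bm ab_large; apply/eqP; apply: contraTT ab_large => ab.
have := codeA a b aA bA ab.
have [+ _] := leq_card_setU (a :\: b) (b :\: a); rewrite /symdiff !cardsD setIC.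
have := subset_leq_card (subsetIl a b); lia.
Qed.

End ShadowsAndCodes.

Section ShadowBound.
Variables (n k r : nat) (S A : {set {set 'I_n}}).
Hypotheses (r_gt0 : 0 < r) (k_large : n + 6 * r <= 2 * k) (k_le_n : k <= n).
Hypothesis S_layer : S \subset binom n k.
Hypothesis A_layer : A \subset binom n (k - r) :\: shadow r S.
Hypothesis A_code : dist_code (2 * r + 1) A.
Implicit Types (a s x y z : {set 'I_n}).

Local Notation l := (k - 3 * r).
Local Notation U := (shadow (3 * r) S :|: shadow (2 * r) A).
Local Notation Sc := (binom n k :\: S).
Local Notation subs_l a := [set y : {set 'I_n} | (y \subset a) && (#|y| == l)].
Local Notation sups_k a := [set x : {set 'I_n} | (#|x| == k) && (a \subset x)].
Local Notation U_below x := [set z in U | z \subset x].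

Lemma card_S s : s \in S -> #|s| = k.
Proof. by move/(subsetP S_layer); rewrite inE => /eqP. Qed.

Lemma card_A a : a \in A -> #|a| = k - r.
Proof. by move/(subsetP A_layer); rewrite !inE => /andP [_ /eqP]. Qed.

Lemma A_notin_shadow a : a \in A -> a \notin shadow r S.
Proof. by move/(subsetP A_layer); rewrite !inE => /andP []. Qed.

Lemma card_U y : y \in U -> #|y| = l.
Proof.
have A_layer' : A \subset binom n (k - r).
  by apply/subsetP => a /card_A ak; rewrite inE ak.
case/setUP => [/(card_shadow S_layer) -> // | /(card_shadow A_layer') ->]; lia.
Qed.

Lemma mem_U_of_S s z : s \in S -> z \subset s -> #|z| = l -> z \in U.
Proof. by move=> sS zs zl; rewrite inE (mem_shadow sS zs) // zl card_S //; lia. Qed.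

Lemma mem_U_of_A a y : a \in A -> y \subset a -> #|y| = l -> y \in U.
Proof. by move=> aA ya yl; rewrite inE (mem_shadow aA ya) ?orbT // yl (card_A aA); lia. Qed.

Lemma card_U_mul :
  #|U| * 'C(n - l, 3 * r) = #|S| * 'C(k, l) + \sum_(y in U) deg Sc y.
Proof.
rewrite -sum_nat_const (eq_bigr (fun y => deg S y + deg Sc y)); last first.
  move=> y yU; rewrite -deg_setID // deg_binom card_U //; last by lia.
  congr 'C(_, _); lia.
rewrite big_split /=; congr (_ + _).
rewrite /deg exchange_big /= -sum_nat_const.
apply: eq_bigr => s sS; rewrite sum_nat_mem_card -(card_S sS) -cards_draws.
apply: eq_card => y; rewrite in_set [in RHS]in_set andbC (card_S sS).
apply/andP/andP => [[ys /card_U ->] | [ys /eqP yl]] //.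
by rewrite (mem_U_of_S sS ys).
Qed.

Lemma sum_deg_A :
  \sum_(a in A) \sum_(y in subs_l a) deg Sc y + \sum_(a in A) \sum_(y in subs_l a) deg S y
    = #|A| * ('C(k - r, l) * 'C(n - l, 3 * r)).
Proof.
rewrite -big_split /= -sum_nat_const; apply: eq_bigr => a aA.
rewrite -big_split /= (eq_bigr (fun _ => 'C(n - l, 3 * r))); last first.
  move=> y; rewrite inE => /andP [ya /eqP yl].
  rewrite addnC -deg_setID // deg_binom yl //; last by lia.
  congr 'C(_, _); lia.
by rewrite sum_nat_const cards_draws card_A.
Qed.

Lemma superset_A_notin_S a x : a \in A -> a \subset x -> #|x| = k -> x \notin S.
Proof.
move=> aA ax xk; apply: contra (A_notin_shadow aA) => xS.
by rewrite (mem_shadow xS ax) // (card_A aA) xk; lia.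
Qed.

Lemma superset_A_uniq a b x :
  a \in A -> b \in A -> a \subset x -> b \subset x -> #|x| = k -> a = b.
Proof.
move=> aA bA ax bx xk; apply: (dist_code_eq A_code aA bA (card_A aA) (card_A bA)).
have := cardsUI a b; have : #|a :|: b| <= k by rewrite -xk subset_leq_card // subUset ax.
rewrite (card_A aA) (card_A bA); lia.
Qed.

Lemma count_A_below x : #|[set a | (a \in A) && (x \in sups_k a)]| <= (x \in Sc).
Proof.
apply: card_le_bool => [a | a b]; rewrite !inE => /andP [aA /andP [/eqP xk ax]].
  by rewrite xk eqxx (superset_A_notin_S aA ax xk).
by move=> /andP [bA /andP [_ bx]]; apply: superset_A_uniq xk.
Qed.

(* Two codewords through y sharing an r-set Z outside y would meet in k - 2r points;
   so each r-set outside y lies in at most one of the C(2r, r)-element families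
   attached to the codewords through y. *)
Lemma codewords_above_card y : #|y| = l ->
  'C(2 * r, r) * #|[set a in A | y \subset a]| <= 'C(n - l, r).
Proof.
move=> yl; set Ay := [set a in A | y \subset a].
pose R a := [set Z : {set 'I_n} | (Z \subset a :\: y) && (#|Z| == r)].
pose D := [set Z : {set 'I_n} | (Z \subset ~: y) && (#|Z| == r)].
have -> : 'C(n - l, r) = \sum_Z (Z \in D) * 1.
  by rewrite -sum_mem_mul sum1_card cards_draws cardsCs setCK card_ord yl.
have -> : 'C(2 * r, r) * #|Ay| = \sum_(a in Ay) \sum_(Z in R a) 1.
  rewrite mulnC -sum_nat_const; apply: eq_bigr => a; rewrite inE => /andP [aA ya].
  by rewrite sum1_card cards_draws cardsDS // (card_A aA) yl; congr 'C(_, _); lia.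
rewrite exchange_sum_dep; apply: leq_sum => Z _; rewrite leq_mul2r orbC.
apply/orP; left; apply: card_le_bool => [a | a b]; rewrite !inE.
  case/andP => _ /andP [Za ->]; rewrite andbT.
  by apply: subset_trans Za _; rewrite setDE subsetIr.
move=> /andP [/andP [aA ya] /andP [Za /eqP Zr]] /andP [/andP [bA yb] /andP [Zb _]].
apply: (dist_code_eq A_code aA bA (card_A aA) (card_A bA)).
have : y :|: Z \subset a :&: b.
  rewrite subsetI !subUset ya yb.
  by rewrite (subset_trans Za (subsetDl _ _)) (subset_trans Zb (subsetDl _ _)).
move/subset_leq_card; rewrite cardsU_disjoint ?yl ?Zr; first lia.
by rewrite disjoint_sym; move: Za; rewrite subsetD => /andP [].
Qed.

Lemma count_A_above y :
  'C(2 * r, r) * #|[set a | (a \in A) && (y \in subs_l a)]| <= (y \in U) * 'C(n - l, r).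
Proof.
have [-> | [a]] := set_0Vmem [set a | (a \in A) && (y \in subs_l a)].
  by rewrite cards0 muln0.
rewrite [in X in X -> _]inE => /andP [aA]; rewrite [in X in X -> _]inE => /andP [ya /eqP yl].
rewrite (mem_U_of_A aA ya yl) mul1n; apply: leq_trans (codewords_above_card yl).
rewrite leq_mul2l subset_leq_card ?orbT //.
by apply/subsetP => b; rewrite !inE => /andP [-> /andP [-> _]].
Qed.

Lemma sum_deg_Sc_A :
  'C(2 * r, r) * \sum_(a in A) \sum_(y in subs_l a) deg Sc y
    <= 'C(n - l, r) * \sum_(y in U) deg Sc y.
Proof.
rewrite exchange_sum_dep sum_mem_mul !big_distrr /=; apply: leq_sum => y _.
by rewrite !mulnA [_ * (y \in U)]mulnC leq_mul2r count_A_above orbT.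
Qed.

Local Notation covered a y x := [exists s in S, y :|: (x :\: a) \subset s].

Lemma card_cover a y x : a \in A -> y \subset a -> #|y| = l -> #|x| = k -> a \subset x ->
  #|y :|: (x :\: a)| = l + r.
Proof.
move=> aA ya yl xk ax.
rewrite cardsU_disjoint ?(disjointWl ya (disjoint_setD _ _)) // yl cardsDS // xk (card_A aA).
lia.
Qed.

Lemma deg_S_leq_sum_lifts a y : a \in A -> y \subset a ->
  deg S y <= \sum_(x in sups_k a) deg S (y :|: (x :\: a)).
Proof.
move=> aA ya; rewrite /deg exchange_big /=; apply: leq_sum => s sS.
case: (boolP (y \subset s)) => //= ys.
have : 0 < #|[set W : {set 'I_n} | (W \subset s :\: a) && (#|W| == r)]|.
  rewrite cards_draws bin_gt0 cardsD card_S //.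
  have := subset_leq_card (subsetIr s a); rewrite (card_A aA); lia.
rewrite card_gt0 => /set0Pn [W]; rewrite inE subsetD => /andP [/andP [Ws Wa] /eqP Wr].
have Wx : a :|: W \in sups_k a.
  by rewrite inE cardsU_disjoint 1?disjoint_sym // (card_A aA) Wr subnK ?eqxx ?subsetUl //; lia.
rewrite (bigD1 _ Wx) /= setDUl setDv set0U (setDidPl Wa) subUset ys Ws.
exact: leq_addr.
Qed.

Lemma deg_S_cover a y x : a \in A -> y \in subs_l a -> x \in sups_k a ->
  deg S (y :|: (x :\: a)) <= covered a y x * 'C(n - l - r, 2 * r).
Proof.
move=> aA; rewrite !inE => /andP [ya /eqP yl] /andP [/eqP xk ax].
case: (boolP (covered a y x)) => [_ | uncovered].
  rewrite mul1n; apply: leq_trans (deg_subset _ S_layer) _.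
  rewrite deg_binom card_cover //; last by lia.
  by rewrite subnDA (_ : k - (l + r) = 2 * r) //; lia.
rewrite mul0n leqn0 /deg sum_nat_eq0; apply/forall_inP => s sS; rewrite eqb0.
by apply: contra uncovered => vs; apply/existsP; exists s; rewrite sS.
Qed.

Lemma sum_deg_S_covered a : a \in A ->
  \sum_(y in subs_l a) deg S y <=
    'C(n - l - r, 2 * r) * \sum_(y in subs_l a) \sum_(x in sups_k a) covered a y x.
Proof.
move=> aA; rewrite big_distrr /=; apply: leq_sum => y yY.
have /andP [ya _] : (y \subset a) && (#|y| == l) by rewrite inE in yY.
apply: leq_trans (deg_S_leq_sum_lifts aA ya) _.
rewrite big_distrr /=; apply: leq_sum => x xX.
by rewrite mulnC deg_S_cover.
Qed.

Lemma card_A_setD a x z : a \in A -> #|x| = k -> a \subset x -> z \subset x -> #|z| = l ->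
  #|a :\: z| <= 3 * r.
Proof.
move=> aA xk ax zx zl.
have := cardsID a z; have := subset_leq_card (setSD a zx).
rewrite [#|a :\: z|]cardsD [#|x :\: a|]cardsDS // xk (card_A aA) zl setIC; lia.
Qed.

(* y is recovered from a :\: y, a 2r-subset of a :\: z, which has at most 3r points. *)
Lemma count_subs_l_cover a x z : a \in A -> x \in sups_k a -> z \in U ->
  \sum_(y in subs_l a) (z \subset y :|: (x :\: a) : nat) <= 'C(3 * r, r) * (z \subset x).
Proof.
move=> aA; rewrite inE => /andP [/eqP xk ax] /card_U zl.
have [zx | zNx] := boolP (z \subset x); last first.
  rewrite muln0 leqn0 sum_nat_eq0; apply/forall_inP => y; rewrite inE => /andP [ya _].
  rewrite eqb0; apply: contra zNx => /subset_trans; apply.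
  by rewrite subUset (subset_trans ya ax) subsetDl.
rewrite muln1 sum_nat_mem_card.
set Y := [set y in subs_l a | _].
have complement_inj : {in Y &, injective (setD a)}.
  move=> y1 y2; rewrite !inE => /andP [/andP [y1a _] _] /andP [/andP [y2a _] _] e.
  have := congr1 (setD a) e.
  by rewrite !setDDr setDv !set0U (setIidPr y1a) (setIidPr y2a).
rewrite -(card_in_imset complement_inj).
apply: (@leq_trans #|[set V : {set 'I_n} | (V \subset a :\: z) && (#|V| == 2 * r)]|).
  apply: subset_leq_card; apply/subsetP => V /imsetP [y].
  rewrite !inE => /andP [/andP [ya /eqP yl] zv] ->.
  rewrite cardsDS // (card_A aA) yl.
  have -> : k - r - l = 2 * r by lia.
  rewrite eqxx andbT.
  apply/subsetP => e; rewrite !inE => /andP [ey ea]; rewrite ea andbT.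
  by apply: contra ey => /(subsetP zv); rewrite !inE ea /= orbF.
rewrite cards_draws; apply: leq_trans (leq_bin2l _ (card_A_setD aA xk ax zx zl)) _.
have -> : 2 * r = 3 * r - r by lia.
by rewrite bin_sub //; lia.
Qed.

Lemma covered_subsets_in_U a y x : a \in A -> y \in subs_l a -> x \in sups_k a ->
  'C(l + r, r) * covered a y x <= \sum_(z in U) (z \subset y :|: (x :\: a) : nat).
Proof.
move=> aA; rewrite !inE => /andP [ya /eqP yl] /andP [/eqP xk ax].
have [/existsP [s /andP [sS vs]] | _] := boolP (covered a y x); last by rewrite muln0.
rewrite muln1 sum_nat_mem_card.
have -> : 'C(l + r, r) = #|[set z : {set 'I_n} | (z \subset y :|: (x :\: a)) && (#|z| == l)]|.
  rewrite cards_draws card_cover // -bin_sub; last by lia.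
  by congr 'C(_, _); lia.
apply: subset_leq_card; apply/subsetP => z; rewrite in_set => /andP [zv /eqP zl].
by rewrite inE zv andbT (mem_U_of_S sS (subset_trans zv vs)).
Qed.

Lemma covered_leq_U_below a : a \in A ->
  'C(l + r, r) * \sum_(y in subs_l a) \sum_(x in sups_k a) covered a y x
    <= 'C(3 * r, r) * \sum_(x in sups_k a) #|U_below x|.
Proof.
move=> aA.
apply: (@leq_trans (\sum_(y in subs_l a) \sum_(x in sups_k a)
                     \sum_(z in U) (z \subset y :|: (x :\: a) : nat))).
  rewrite big_distrr; apply: leq_sum => y yY.
  by rewrite big_distrr; apply: leq_sum => x xX; apply: covered_subsets_in_U.
rewrite exchange_big big_distrr; apply: leq_sum => x xX.
rewrite exchange_big -sum_nat_mem_card big_distrr; apply: leq_sum => z zU.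
exact: count_subs_l_cover.
Qed.

Lemma sum_U_below_A :
  \sum_(a in A) \sum_(x in sups_k a) #|U_below x| <= \sum_(y in U) deg Sc y.
Proof.
have -> : \sum_(y in U) deg Sc y = \sum_(x in Sc) #|U_below x|.
  by rewrite /deg exchange_big; apply: eq_bigr => x _; rewrite sum_nat_mem_card.
rewrite exchange_sum_dep sum_mem_mul; apply: leq_sum => x _.
by rewrite leq_mul2r count_A_below orbT.
Qed.

Lemma sum_deg_S_A :
  'C(l + r, r) * \sum_(a in A) \sum_(y in subs_l a) deg S y
    <= 'C(n - l - r, 2 * r) * 'C(3 * r, r) * \sum_(y in U) deg Sc y.
Proof.
rewrite big_distrr /=.
apply: (@leq_trans (\sum_(a in A)
    'C(n - l - r, 2 * r) * 'C(3 * r, r) * \sum_(x in sups_k a) #|U_below x|)).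
  apply: leq_sum => a aA.
  apply: leq_trans (leq_mul (leqnn _) (sum_deg_S_covered aA)) _.
  by rewrite mulnCA -mulnA leq_mul2l covered_leq_U_below ?orbT.
by rewrite -big_distrr /= leq_mul2l sum_U_below_A orbT.
Qed.

Lemma shadow_union_bound :
  2 * (2 * r) ^ (3 * r) * #|S| + n ^ r * #|A| <= 2 * (2 * r) ^ (3 * r) * #|U|.
Proof.
set K := (2 * r) ^ (3 * r); set M := 'C(k - r, 2 * r); set E := 'C(n - l, 3 * r).
set e := \sum_(y in U) deg Sc y.
set X := \sum_(a in A) \sum_(y in subs_l a) deg Sc y.
set Y := \sum_(a in A) \sum_(y in subs_l a) deg S y.
have l_large : n <= 2 * l by lia.
have E_gt0 : 0 < E by rewrite bin_gt0; lia.
have M_gt0 : 0 < M by rewrite bin_gt0; lia.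
have bound_X : n ^ r * X <= K * M * e.
  have lower := expn_bin_sub_leq r_gt0 l_large.
  rewrite (_ : l + 2 * r = k - r) in lower; last by lia.
  apply: (@leq_trans (n ^ r * ('C(2 * r, r) * X))).
    by rewrite leq_mul2l leq_pmull ?orbT // bin_gt0; lia.
  apply: leq_trans (leq_mul (leqnn _) sum_deg_Sc_A) _.
  by rewrite mulnA leq_mul2r lower orbT.
have bound_Y : n ^ r * Y <= K * M * e.
  have d_gt0 : 0 < 'C(l + r, r) by rewrite bin_gt0; lia.
  rewrite -(leq_pmul2l d_gt0) mulnCA.
  apply: leq_trans (leq_mul (leqnn _) sum_deg_S_A) _.
  have C2_le_M : 'C(n - l - r, 2 * r) <= M by apply: leq_bin2l; lia.
  have := leq_mul C2_le_M (expn_bin_3r_leq r_gt0 l_large).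
  rewrite -/K => upper.
  have := leq_mul upper (leqnn e); nia.
have bound_A : n ^ r * #|A| * E <= 2 * K * e.
  rewrite -(leq_pmul2l M_gt0).
  have XY : X + Y = #|A| * (M * E).
    by rewrite sum_deg_A; congr (_ * (_ * _)); rewrite -bin_sub; [congr 'C(_, _) | ]; lia.
  have := leq_add bound_X bound_Y; rewrite -mulnDr XY; nia.
have E_le : E <= 'C(k, l).
  rewrite -[in X in _ <= X]bin_sub; last by lia.
  by rewrite (_ : k - l = 3 * r); [apply: leq_bin2l | ]; lia.
rewrite -(leq_pmul2r E_gt0).
have := card_U_mul; have := leq_mul (leqnn #|S|) E_le; nia.
Qed.

End ShadowBound.

Import Order.TTheory GRing.Theory Num.Theory.
Local Open Scope ring_scope.

Theorem lemma3 (n r k : nat) (S A : {set {set 'I_n}}) :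
  (1 <= n)%N -> (1 <= r)%N -> (8 * r <= n)%N ->
  ((n%:R / 2 + 3 * r%:R : rat) <= k%:R) -> ((k%:R : rat) <= 3 * n%:R / 4) ->
  S \subset binom n k ->
  A \subset binom n (k - r) :\: shadow r S ->
  dist_code (2 * r + 1) A ->
  (#|shadow (3 * r) S :|: shadow (2 * r) A|%:R : rat) >=
    #|S|%:R + (n%:R ^+ r * #|A|%:R) / (4 * (2 * r)%:R ^+ (3 * r)).
Proof.
move=> _ r_gt0 _ k_lower k_upper S_layer A_layer A_code.
have k_large : (n + 6 * r <= 2 * k)%N by rewrite -(ler_nat rat) natrD !natrM; lra.
have k_le_n : (k <= n)%N by rewrite -(ler_nat rat); have := ler0n rat k; lra.
have := shadow_union_bound r_gt0 k_large k_le_n S_layer A_layer A_code.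
rewrite -(ler_nat rat) natrD !natrM.
set K := ((2 * r) ^ (3 * r))%N%:R; set U := shadow _ _ :|: _.
have -> : (2 * r%:R) ^+ (3 * r) = K :> rat by rewrite /K natrX natrM.
have K_gt0 : 0 < K by rewrite ltr0n expn_gt0 muln_gt0 r_gt0.
have NA_ge0 : 0 <= (n ^ r)%:R * #|A|%:R :> rat by rewrite mulr_ge0.
move=> bound; rewrite -natrX -lerBrDl ler_pdivrMr ?mulr_gt0 //; nra.
Qed.
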